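(* Let $G$ be a finite directed graph and $R\subseteq V(G)$, and consider the maximal faces of $\mathrm{DT}_R(G)$ (all of which are directed forests with root set $R$). Call a vertex $v$ ''left'' if, in every maximal face of $\mathrm{DT}_R(G)$, the tree containing $v$ has the same root $r$ and the directed path from $r$ to $v$ is the same; call all other vertices ''right''. Then every edge $(x\rightarrow y)$ lying in some maximal face of $\mathrm{DT}_R(G)$ whose endpoints are on different sides (one left, one right) is nice in $\mathrm{DT}_R(G)$.
   Context: A directed forest in $G$ is a set of edges of $G$ which, viewed as a graph on $V(G)$, is acyclic and has at most one edge directed to each vertex; equivalently a disjoint union of directed trees with all edges oriented away from the root. Its roots are the vertices with no forest edge directed to them. $\mathrm{DT}(G)$ is the simplicial complex with vertex set $E(G)$ whose simplices are the directed forests; $\mathrm{DT}_R(G)$ is the subcomplex generated by the directed forests with root set exactly $R$. An edge $(x\rightarrow y)$ of $G$ is nice in a subcomplex $\Delta$ of $\mathrm{DT}(G)$ if (i) there is an edge $(z\rightarrow y)$ in $\Delta$ with $z\ne x$, and (ii) every forest $F\in\Delta$ without an edge directed to $y$ satisfies $F\cup\{(x\rightarrow y)\}\in\Delta$. *)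

From mathcomp Require Import all_boot.
Set Implicit Arguments. Unset Strict Implicit. Unset Printing Implicit Defensive.

(* A finite directed graph G: vertex type V (a finType) and edge set
   E : {set V * V}; an edge (x, y) is the directed edge x -> y.
   Sets of edges F : {set V * V}. *)

Section DT.
Variable V : finType.

Definition erel (F : {set V * V}) : rel V := fun x y => (x, y) \in F.

Definition indeg_le1 (F : {set V * V}) : Prop :=
  forall x x' y, (x, y) \in F -> (x', y) \in F -> x = x'.

(* F is acyclic (no directed cycle; given in-degree <= 1 this is the same
   as the underlying undirected graph being acyclic) *)
Definition acyclic (F : {set V * V}) : Prop :=
  forall x y, (x, y) \in F -> ~~ connect (erel F) y x.

Definition directed_forest (E F : {set V * V}) : Prop :=
  F \subset E /\ indeg_le1 F /\ acyclic F.

Definition roots (F : {set V * V}) : {set V} :=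
  [set v | [forall u, (u, v) \notin F]].

Definition DT_R (E : {set V * V}) (R : {set V}) (F : {set V * V}) : Prop :=
  exists F' : {set V * V}, F \subset F' /\ directed_forest E F' /\ roots F' = R.

Definition maximal_face (Delta : {set V * V} -> Prop) (F : {set V * V}) : Prop :=
  Delta F /\ forall F' : {set V * V}, Delta F' -> F \subset F' -> F' = F.

(* left vertex: a common root r and a common directed path from r to v
   (given by its sequence of vertices after r) in every maximal face *)
Definition left_vertex (E : {set V * V}) (R : {set V}) (v : V) : Prop :=
  exists (r : V) (p : seq V), forall F, maximal_face (DT_R E R) F ->
    r \in roots F /\ path (erel F) r p /\ last r p = v.

Definition nice (E : {set V * V}) (Delta : {set V * V} -> Prop) (x y : V) : Prop :=
  (exists z, z != x /\ Delta [set (z, y)]) /\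
  (forall F : {set V * V}, Delta F -> [forall u, (u, y) \notin F] ->
     Delta (F :|: [set (x, y)])).

End DT.

From Pilot Require Import Defs.
From mathcomp Require Import all_boot.
From Stdlib Require Import Classical.

Set Implicit Arguments. Unset Strict Implicit. Unset Printing Implicit Defensive.

(* The maximal faces of DT_R(G) are exactly the directed forests of G with
   root set R, i.e. the choices of one incoming edge for every v outside R
   that create no cycle.  For a left x and a right y we may therefore
   "reroute" any such forest by replacing the edge entering y with x -> y:
   since y does not lie on the common path from the root to x, it is not an
   ancestor of x, so no cycle appears and the root set is unchanged.  Condition (i) holds because if x -> y were the only
   edge entering y in DT_R(G), every maximal face would extend the path to x
   by the edge x -> y, making y left.  Finally, if y is left then so is its
   parent x in any maximal face, so the right endpoint is always y. *)

Lemma connect_last (T : finType) (e : rel T) x p y :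
  path e x p -> y \in x :: p -> connect e y (last x p).
Proof.
move=> exp yp; case/splitPl: yp exp => p1 p2 <-; rewrite cat_path last_cat.
by case/andP=> _ ep2; apply/connectP; exists p2.
Qed.

Section Forests.
Variable V : finType.
Implicit Types (F G : {set V * V}) (r u v x y : V).

Lemma notin_rootsP F v : reflect (exists u, (u, v) \in F) (v \notin Defs.roots F).
Proof.
rewrite inE negb_forall; apply: (iffP existsP) => -[u]; rewrite ?negbK => uv;
  by exists u; rewrite ?negbK.
Qed.

Lemma connect_erel_subset F G : F \subset G ->
  subrel (connect (erel F)) (connect (erel G)).
Proof. by move=> sFG; apply: connect_sub => u v uv; apply/connect1/(subsetP sFG). Qed.

Lemma acyclic_subset F G : F \subset G -> acyclic G -> acyclic F.
Proof.
move=> sFG acG u v uv; apply: contraNN (acG u v (subsetP sFG _ uv)).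
exact: connect_erel_subset.
Qed.

(* A walk using the new edge x -> y can be cut at its first use of it and
   resumed after its last use. *)
Lemma connect_setU1 F x y u v :
  connect (erel (F :|: [set (x, y)])) u v ->
  connect (erel F) u v \/ connect (erel F) u x /\ connect (erel F) y v.
Proof.
case/connectP=> q + ->; elim: q u => [|w q IHq] u /=; first by left.
case/andP; rewrite /erel in_setU in_set1 => /orP[uw | /eqP[-> ->]] /IHq.
  case=> [wv | [wx yv]]; first by left; apply: connect_trans (connect1 uw) wv.
  by right; split=> //; apply: connect_trans (connect1 uw) wx.
by case=> [yv | [_ yv]]; right.
Qed.

Lemma acyclic_setU1 F x y : acyclic F -> ~~ connect (erel F) y x ->
  acyclic (F :|: [set (x, y)]).
Proof.
move=> acF nyx a b; rewrite in_setU in_set1 => /orP[ab | /eqP[-> ->]].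
  apply/negP => /connect_setU1[ba | [bx ya]]; first by case/negP: (acF a b ab).
  case/negP: nyx; apply: connect_trans ya (connect_trans (connect1 _) bx).
  exact: ab.
by apply/negP => /connect_setU1[|[]] yx; rewrite yx in nyx.
Qed.

Lemma parent_mem_path F r p u w : indeg_le1 F -> path (erel F) r p ->
  w \in p -> (u, w) \in F -> u \in r :: p.
Proof.
move=> indF; elim: p r => [|a p IHp] r //= /andP[ra ap].
rewrite in_cons => /orP[/eqP-> uw | wp uw]; last by rewrite in_cons IHp ?orbT.
by rewrite (indF _ _ _ uw ra) mem_head.
Qed.

Lemma connect_root_path F r p u v : indeg_le1 F -> r \in Defs.roots F ->
  path (erel F) r p -> v \in r :: p -> connect (erel F) u v -> u \in r :: p.
Proof.
move=> indF rroot rp vp /connectP[q + vq]; rewrite {}vq in vp.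
elim: q u vp => [|w q IHq] u //= wqp /andP[uw /(IHq _ wqp)].
rewrite in_cons => /orP[/eqP wr | wp]; last exact: parent_mem_path rp wp uw.
by case/notin_rootsP: rroot; exists u; rewrite -wr.
Qed.

Lemma subset_roots_eq F G : F \subset G -> indeg_le1 G ->
  Defs.roots F = Defs.roots G -> G = F.
Proof.
move=> sFG indG rootsFG; apply/eqP; rewrite eqEsubset andbC sFG /=.
apply/subsetP => -[a b] abG.
have /notin_rootsP[c cbF] : b \notin Defs.roots F.
  by rewrite rootsFG; apply/notin_rootsP; exists a.
by rewrite (indG _ _ _ abG (subsetP sFG _ cbF)).
Qed.

Definition reroute F x y : {set V * V} := [set e in F | e.2 != y] :|: [set (x, y)].

Lemma subset_reroute F G x y : G \subset F -> [forall u, (u, y) \notin G] ->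
  G :|: [set (x, y)] \subset reroute F x y.
Proof.
move=> sGF /forallP noy; apply: setSU; apply/subsetP => -[a b] abG.
by rewrite inE (subsetP sGF _ abG) /=; apply: contraNneq (noy a) => <-.
Qed.

Lemma roots_reroute F x y : y \notin Defs.roots F ->
  Defs.roots (reroute F x y) = Defs.roots F.
Proof.
move=> ynroot; apply/setP => v; case: (eqVneq v y) => [-> | vy].
  rewrite (negbTE ynroot); apply/negbTE/notin_rootsP.
  by exists x; rewrite !inE eqxx orbT.
rewrite !inE; apply: eq_forallb => u.
by rewrite !inE /= vy andbT xpair_eqE (negbTE vy) andbF orbF.
Qed.

Lemma directed_forest_reroute (E F : {set V * V}) x y :
  directed_forest E F -> (x, y) \in E -> ~~ connect (erel F) y x ->
  directed_forest E (reroute F x y).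
Proof.
move=> [sFE [indF acF]] xyE nyx.
have sF'F : [set e in F | e.2 != y] \subset F.
  by apply/subsetP => e; rewrite inE => /andP[].
split; [|split].
- by rewrite subUset sub1set xyE andbT (subset_trans sF'F).
- move=> a a' b; rewrite !inE /= !xpair_eqE.
  case/orP=> [/andP[ab b_y] | /andP[/eqP-> /eqP eb]];
  case/orP=> [/andP[a'b b'y] | /andP[/eqP-> /eqP eb']] //.
  + exact: indF ab a'b.
  + by rewrite eb' eqxx in b_y.
  + by rewrite eb eqxx in b'y.
- apply: acyclic_setU1; first exact: acyclic_subset acF.
  by apply: contraNN nyx; apply: connect_erel_subset.
Qed.

End Forests.

Section MaximalFaces.
Variables (V : finType) (E : {set V * V}) (R : {set V}).
Implicit Types (F : {set V * V}) (x y : V).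

Lemma DT_R_subset F F' : DT_R E R F' -> F \subset F' -> DT_R E R F.
Proof.
move=> [F'' [sF'F'' faceF'']] sFF'.
by exists F''; split=> //; apply: subset_trans sF'F''.
Qed.

Lemma maximal_DT_R_forest F : maximal_face (DT_R E R) F ->
  directed_forest E F /\ Defs.roots F = R.
Proof.
move=> [[F' [sFF' faceF']] maxF].
by rewrite -(maxF F') //; exists F'; split.
Qed.

Lemma forest_maximal_DT_R F : directed_forest E F -> Defs.roots F = R ->
  maximal_face (DT_R E R) F.
Proof.
move=> forF rootsF; split; first by exists F; split.
move=> G [G' [sGG' [[_ [indG' _]] rootsG']]] sFG.
have eqG'F : G' = F.
  by apply: subset_roots_eq (subset_trans sFG sGG') indG' _; rewrite rootsF rootsG'.
by apply/eqP; rewrite eqEsubset sFG andbT -eqG'F.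
Qed.

Lemma left_vertex_parent F x y : maximal_face (DT_R E R) F -> (x, y) \in F ->
  left_vertex E R y -> left_vertex E R x.
Proof.
move=> maxF xyF [r [p leftp]]; have [[_ [indF _]] _] := maximal_DT_R_forest maxF.
have [rroot [rp lastp]] := leftp F maxF.
case/lastP: p leftp rp lastp => [|p a] leftp rp; rewrite ?last_rcons /= => lastp.
  by case/notin_rootsP: rroot; exists x; rewrite lastp.
exists r, p => F' maxF'; have [rroot' [rp' _]] := leftp F' maxF'.
move: rp rp'; rewrite !rcons_path lastp => /andP[_ xy'] /andP[-> _].
by rewrite -(indF _ _ _ xyF xy').
Qed.

Lemma left_vertex_child x y : y \notin R -> left_vertex E R x ->
  (forall z, DT_R E R [set (z, y)] -> z = x) -> left_vertex E R y.
Proof.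
move=> yR [r [p leftp]] onlyx; exists r, (rcons p y) => F maxF.
have [rroot [rp lastp]] := leftp F maxF.
have [_ rootsF] := maximal_DT_R_forest maxF.
have /notin_rootsP[z zy] : y \notin Defs.roots F by rewrite rootsF.
have zx : z = x by apply: onlyx; apply: DT_R_subset maxF.1 _; rewrite sub1set.
by rewrite rcons_path last_rcons rp lastp -zx.
Qed.

Lemma DT_R_setU1_left F0 x y : maximal_face (DT_R E R) F0 -> (x, y) \in F0 ->
  left_vertex E R x -> forall F, DT_R E R F -> [forall u, (u, y) \notin F] ->
  DT_R E R (F :|: [set (x, y)]).
Proof.
move=> maxF0 xyF0 [r [p leftp]] F [F' [sFF' [forF' rootsF']]] noy.
have [[sF0E [_ acF0]] rootsF0] := maximal_DT_R_forest maxF0.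
have yF' : y \notin Defs.roots F'.
  by rewrite rootsF' -rootsF0; apply/notin_rootsP; exists x.
have ynp : y \notin r :: p.
  have [_ [rp0 lastp0]] := leftp F0 maxF0.
  by apply: contraNN (acF0 x y xyF0) => /(connect_last rp0); rewrite lastp0.
have nyx : ~~ connect (erel F') y x.
  have [rroot [rp lastp]] := leftp F' (forest_maximal_DT_R forF' rootsF').
  apply: contraNN ynp; apply: connect_root_path forF'.2.1 rroot rp _.
  by rewrite -lastp mem_last.
exists (reroute F' x y); split; first exact: subset_reroute.
split; first exact: directed_forest_reroute forF' (subsetP sF0E _ xyF0) nyx.
by rewrite roots_reroute.
Qed.

End MaximalFaces.

Theorem proposition2p5 (V : finType) (E : {set V * V}) (R : {set V}) (x y : V) :
  (exists F, maximal_face (DT_R E R) F /\ (x, y) \in F) ->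
  (left_vertex E R x /\ ~ left_vertex E R y) \/
  (~ left_vertex E R x /\ left_vertex E R y) ->
  nice E (DT_R E R) x y.
Proof.
move=> [F0 [maxF0 xyF0]] sides.
have [xleft yright] : left_vertex E R x /\ ~ left_vertex E R y.
  case: sides => [// | [xright yleft]].
  by case: xright; apply: left_vertex_parent maxF0 xyF0 yleft.
have yR : y \notin R.
  by have [_ <-] := maximal_DT_R_forest maxF0; apply/notin_rootsP; exists x.
split; last exact: DT_R_setU1_left maxF0 xyF0 xleft.
apply: NNPP => noz; apply/yright/(left_vertex_child yR xleft) => z zy_face.
by apply/eqP/negPn/negP => zx; apply: noz; exists z.
Qed.
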